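(* Fix an integer $N_T\ge 1$ and let $B_T=1/N_T$. Fix parameters $\Delta_T>0$, $\delta_T>0$, a pilot length $n\ge 1$, a pre-beamforming SNR $\gamma>0$ and a constant receive gain $G_R>0$. For an initial angular error $\epsilon\in[-B_T,B_T]$, let $Q^+$ and $Q^-$ be independent non-central chi-square random variables with $2$ degrees of freedom and non-centrality parameters $\eta^{\pm}=2n\gamma G_R\, G_T(\epsilon\pm\Delta_T)$, let $\Gamma=2n\gamma G_R\,G_T(\epsilon)$, let $h=\delta_T\,(Q^+-Q^-)/\Gamma$, and let $\tilde h=\min(|h|,B_T)\cdot z(h)$, where $z(\cdot)\in\{-1,1\}$ is the sign function. For $a\ge 0$ define the events $\mathcal A_\epsilon=\{|\epsilon+\tilde h|>B_T\}$ and $\mathcal B_\epsilon(a)=\{|\epsilon+\tilde h|+a>B_T\}$, and define $$J_a=\sup_{\epsilon\in[-B_T,B_T]}\Big[\Pr(\mathcal A_\epsilon)+\Pr\big(\mathcal B_\epsilon(a)\cap\overline{\mathcal A_\epsilon}\big)\Big],$$ where $\overline{\mathcal A_\epsilon}$ is the complement of $\mathcal A_\epsilon$. Then $J_a$ is monotonically increasing (non-decreasing) in $a$ on $[0,B_T)$, i.e., $J_a\le J_{a'}$ whenever $0\le a\le a'<B_T$.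
   Context: This is the ''fixed single-path model'' of analog beam tracking at a base station with a uniform linear array of $N_T$ isotropic antennas with spacing $d$ and carrier wavelength $\lambda$. Angles are expressed in the sine domain. The beamforming gain at angular offset $\epsilon$ is $G_T(\epsilon)=\big|\frac{1}{\sqrt{N_T}}\sum_{k=0}^{N_T-1}e^{j2\pi\frac{d}{\lambda}k\epsilon}\big|^2$, so $G_T(0)=N_T$; $B_T=1/N_T$ is half the beam width. In the tracking algorithm, two measurements $Q^{\pm}$ are taken with sampling beams perturbed by $\pm\Delta_T$ from the current data beam, whose error relative to the path direction is $\epsilon$; the beam is corrected by $\tilde h$ (so the post-correction error is $\epsilon+\tilde h$), and $a$ is an upper bound on the magnitude of the path-angle change between two consecutive corrections. $J_a$ is the resulting upper bound on the probability of losing track (error leaving $[-B_T,B_T]$) between two corrections. *)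

From HB Require Import structures.
From mathcomp Require Import all_boot all_order all_algebra.
From mathcomp Require Import all_classical all_reals all_analysis.
Set Implicit Arguments. Unset Strict Implicit. Unset Printing Implicit Defensive.
Import Order.TTheory GRing.Theory Num.Theory.
Local Open Scope classical_set_scope.
Local Open Scope ring_scope.

Section defs.
Variable R : realType.

(* Transmit beamforming gain of a ULA with NT antennas and spacing ratio
   d/lambda = dl, at sine-domain offset e:
   G_T(e) = | 1/sqrt(NT) * sum_{k<NT} exp(j 2 pi dl k e) |^2,
   written out as (squared real part + squared imaginary part). *)
Definition GT (NT : nat) (dl e : R) : R :=
  ((\sum_(k < NT) cos (2 * pi * dl * k%:R * e)) ^+ 2
   + (\sum_(k < NT) sin (2 * pi * dl * k%:R * e)) ^+ 2) / NT%:R.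

(* Law of a non-central chi-square variable with 2 degrees of freedom and
   non-centrality eta >= 0: the law of (X + sqrt eta)^2 + Y^2 with X, Y
   independent standard normals. *)
Definition ncchi2_2 (eta : R) (A : set R) : \bar R :=
  (\int[lebesgue_measure]_x \int[lebesgue_measure]_y
     ((\1_A ((x + Num.sqrt eta) ^+ 2 + y ^+ 2) : R)
        * normal_pdf 0 1 x * normal_pdf 0 1 y)%:E)%E.

Definition zsign (h : R) : R := if h < 0 then -1 else 1.

Definition clipcorr (B h : R) : R := Num.min `|h| B * zsign h.

Definition indep2 d (T : measurableType d) (P : probability T R)
  (X Y : T -> R) : Prop :=
  forall A B : set R, measurable A -> measurable B ->
    P (X @^-1` A `&` Y @^-1` B) = (P (X @^-1` A) * P (Y @^-1` B))%E.

Definition is_ncchi2_2 d (T : measurableType d) (P : probability T R)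
  (eta : R) (X : T -> R) : Prop :=
  measurable_fun setT X /\
  forall A : set R, measurable A -> P (X @^-1` A) = ncchi2_2 eta A.

Definition evA d (T : measurableType d) (B eps : R) (ht : T -> R) : set T :=
  [set t | B < `|eps + ht t|].
Definition evB d (T : measurableType d) (B eps a : R) (ht : T -> R) : set T :=
  [set t | B < `|eps + ht t| + a].

Definition htilde d (T : measurableType d) (NT : nat) (dl deltaT n gamma GR : R)
  (Qp Qm : R -> T -> R) (eps : R) (t : T) : R :=
  clipcorr (NT%:R)^-1 (deltaT * (Qp eps t - Qm eps t)
                       / (2 * n * gamma * GR * GT NT dl eps)).

Definition lossprob d (T : measurableType d) (P : probability T R)
  (NT : nat) (dl deltaT n gamma GR : R) (Qp Qm : R -> T -> R) (a eps : R)
  : \bar R :=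
  let B := (NT%:R)^-1 in
  let ht := htilde NT dl deltaT n gamma GR Qp Qm eps in
  (P (evA B eps ht) + P (evB B eps a ht `&` ~` evA B eps ht))%E.

(* J_a = sup over eps in [-B_T, B_T];  Qp eps, Qm eps are Q^+, Q^- for error eps *)
Definition Ja d (T : measurableType d) (P : probability T R)
  (NT : nat) (dl deltaT n gamma GR : R) (Qp Qm : R -> T -> R) (a : R) : \bar R :=
  ereal_sup (lossprob P NT dl deltaT n gamma GR Qp Qm a @`
               `[- (NT%:R)^-1, (NT%:R)^-1]).
End defs.

From HB Require Import structures.
From mathcomp Require Import all_boot all_order all_algebra.
From mathcomp Require Import all_classical all_reals all_analysis.
From mathcomp Require Import measurable_realfun.
Import Order.TTheory GRing.Theory Num.Theory.
Local Open Scope classical_set_scope.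
Local Open Scope ring_scope.

(* Enlarging the margin a only enlarges the event B_eps(a), while A_eps does
   not depend on a; so for every eps the loss probability is monotone in a,
   and so is its supremum J_a.  The distributional hypotheses on Q^+, Q^- are
   needed only to make these events measurable. *)

Lemma le_ereal_sup_image (R : realType) (I : Type) (S : set I)
    (f g : I -> \bar R) :
  (forall i, S i -> (f i <= g i)%E) ->
  (ereal_sup (f @` S) <= ereal_sup (g @` S))%E.
Proof.
move=> fg; apply: ge_ereal_sup => _ [i Si <-].
by apply: le_trans (fg i Si) _; apply: ereal_sup_ubound; exists i.
Qed.

Section loss_events.
Variables (R : realType) (d : measure_display) (T : measurableType d).

Lemma measurable_zsign : measurable_fun setT (@zsign R).
Proof. by apply: measurable_fun_ifT => //; exact: measurable_fun_ltr. Qed.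

Lemma measurable_clipcorr (B : R) : measurable_fun setT (clipcorr B).
Proof.
apply: measurable_funM; last exact: measurable_zsign.
by apply: measurable_minr => //; exact: normr_measurable.
Qed.

Lemma measurable_htilde (NT : nat) (dl deltaT n gamma GR : R)
    (Qp Qm : R -> T -> R) (eps : R) :
  measurable_fun setT (Qp eps) -> measurable_fun setT (Qm eps) ->
  measurable_fun setT (htilde NT dl deltaT n gamma GR Qp Qm eps).
Proof.
move=> mQp mQm; apply: measurableT_comp; first exact: measurable_clipcorr.
under eq_fun do rewrite mulrAC.
exact: measurable_funM (measurable_cst _) (measurable_funB mQp mQm).
Qed.

Variables (B eps : R) (ht : T -> R).

Lemma evA_evB0 : evA B eps ht = evB B eps 0 ht.
Proof. by apply/seteqP; split=> t; rewrite /evA /evB /= addr0. Qed.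

Lemma subset_evB (a a' : R) : a <= a' -> evB B eps a ht `<=` evB B eps a' ht.
Proof. by move=> aa' t /= /lt_le_trans; apply; rewrite lerD2l. Qed.

Lemma measurable_evB (a : R) :
  measurable_fun setT ht -> measurable (evB B eps a ht).
Proof.
move=> mht.
have -> : evB B eps a ht = setT `&` (fun t => `|eps + ht t|) @^-1` `]B - a, +oo[.
  by rewrite setTI preimage_itvoy; apply/seteqP; split=> t /=; rewrite ltrBlDr.
have mnorm : measurable_fun setT (fun t => `|eps + ht t|).
  apply: measurableT_comp (@normr_measurable R setT) _.
  exact: measurable_funD (measurable_cst _) mht.
exact: mnorm.
Qed.

End loss_events.

Lemma le_lossprob (R : realType) (d : measure_display) (T : measurableType d)
    (P : probability T R) (NT : nat) (dl deltaT n gamma GR : R)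
    (Qp Qm : R -> T -> R) (eps a a' : R) :
  measurable_fun setT (Qp eps) -> measurable_fun setT (Qm eps) -> a <= a' ->
  (lossprob P NT dl deltaT n gamma GR Qp Qm a eps
   <= lossprob P NT dl deltaT n gamma GR Qp Qm a' eps)%E.
Proof.
move=> mQp mQm aa'; apply: leeD2l.
set ht := htilde NT dl deltaT n gamma GR Qp Qm eps.
have mht : measurable_fun setT ht by exact: measurable_htilde.
have mAc : measurable (~` evA (NT%:R)^-1 eps ht).
  by apply: measurableC; rewrite evA_evB0; exact: measurable_evB.
apply: le_measure; rewrite ?inE.
1,2: by apply: measurableI => //; exact: measurable_evB.
by apply: setSI; exact: subset_evB.
Qed.

Theorem lemma1 (R : realType) (d : measure_display) (T : measurableType d)
  (P : probability T R) (NT : nat) (dl DeltaT deltaT : R) (n : nat)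
  (gamma GR : R) (Qp Qm : R -> T -> R) :
  (1 <= NT)%N -> 0 < dl -> 0 < DeltaT -> 0 < deltaT -> (1 <= n)%N ->
  0 < gamma -> 0 < GR ->
  (forall eps : R, - (NT%:R)^-1 <= eps <= (NT%:R)^-1 ->
     is_ncchi2_2 P (2 * n%:R * gamma * GR * GT NT dl (eps + DeltaT)) (Qp eps)
     /\ is_ncchi2_2 P (2 * n%:R * gamma * GR * GT NT dl (eps - DeltaT)) (Qm eps)
     /\ indep2 P (Qp eps) (Qm eps)) ->
  forall a a' : R, 0 <= a -> a <= a' -> a' < (NT%:R)^-1 ->
    (Ja P NT dl deltaT n%:R gamma GR Qp Qm a
     <= Ja P NT dl deltaT n%:R gamma GR Qp Qm a')%E.
Proof.
move=> _ _ _ _ _ _ _ HQ a a' _ aa' _.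
apply: le_ereal_sup_image => eps; rewrite /= in_itv /= => /HQ[[mQp _] [[mQm _] _]].
exact: le_lossprob.
Qed.
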